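(* Let $f:2^V\to\mathbb{Z}_{\ge0}$ be a connectivity function, $W\subseteq V$, and $(C_1,C_2,C_3)$ a minimum $W$-improvement of arity 3. Then for every $i,j\in\{1,2,3\}$ and every set $P$ with $C_i\subseteq P\subseteq C_i\cup(W\cap C_j)$, it holds that $f(P)\ge f(C_i)$.
   Context: A connectivity function $f:2^V\to\mathbb{Z}_{\ge0}$ ($V$ finite) satisfies $f(\emptyset)=0$, $f(X)=f(V\setminus X)$, and $f(X\cup Y)+f(X\cap Y)\le f(X)+f(Y)$. For $W\subseteq V$, a $W$-improvement is a tripartition $(C_1,C_2,C_3)$ of $V$ (pairwise disjoint, possibly empty, union $V$) with $f(C_i)<f(W)/2$, $f(C_i\cap W)<f(W)$, $f(C_i\cap(V\setminus W))<f(W)$ for each $i$. Its width is $\max_i f(C_i)$, its sum-width is $\sum_i f(C_i)$, and its arity is the number of nonempty $C_i$. A $W$-improvement is minimum if it has minimum width among all $W$-improvements, subject to that minimum arity, and subject to those minimum sum-width. *)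

From mathcomp Require Import all_boot.
Set Implicit Arguments. Unset Strict Implicit. Unset Printing Implicit Defensive.

Definition connectivity (V : finType) (f : {set V} -> nat) : Prop :=
  [/\ f set0 = 0,
      forall X, f X = f (~: X) &
      forall X Y, f (X :|: Y) + f (X :&: Y) <= f X + f Y].

(* A tripartition of V, indexed by 'I_3 (C i is the part C_{i+1}). *)
Definition tripartition (V : finType) (C : 'I_3 -> {set V}) : Prop :=
  (forall i j, i != j -> [disjoint C i & C j]) /\
  \bigcup_(i < 3) C i = [set: V].

(* W-improvement; f(C_i) < f(W)/2 is written 2 * f(C_i) < f(W). *)
Definition improvement (V : finType) (f : {set V} -> nat) (W : {set V})
    (C : 'I_3 -> {set V}) : Prop :=
  tripartition C /\
  forall i, [/\ 2 * f (C i) < f W, f (C i :&: W) < f W &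
                f (C i :&: ~: W) < f W].

Definition width (V : finType) (f : {set V} -> nat) (C : 'I_3 -> {set V}) :=
  \max_(i < 3) f (C i).
Definition sumwidth (V : finType) (f : {set V} -> nat) (C : 'I_3 -> {set V}) :=
  \sum_(i < 3) f (C i).
Definition arity (V : finType) (C : 'I_3 -> {set V}) :=
  #|[set i : 'I_3 | C i != set0]|.

Definition min_improvement (V : finType) (f : {set V} -> nat) (W : {set V})
    (C : 'I_3 -> {set V}) : Prop :=
  improvement f W C /\
  forall D, improvement f W D ->
    width f C < width f D \/
    (width f C = width f D /\
     (arity C < arity D \/
      (arity C = arity D /\ sumwidth f C <= sumwidth f D))).

From mathcomp Require Import all_boot zify.

Set Implicit Arguments. Unset Strict Implicit. Unset Printing Implicit Defensive.

(* Suppose f(P) < f(C_i); then j <> i.  If f(P :&: W) < f(W), replacing C_i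
   by P and every other part C_l by C_l :\: P yields a W-improvement:
   posimodularity against P (using P :\: C_j = C_i) shows that neither
   f(C_j :\: P) nor f((C_j :&: W) :\: P) grows, so the width does not grow
   while the sum-width drops, contradicting minimality.  Otherwise
   submodularity of P and W gives f(C_i :|: W) < f(C_i), and then
   (C_i, ~: C_i, set0) is a W-improvement of no larger width and arity 2. *)

Section SetSandwich.
Variables (T : finType) (A B P Y : {set T}).
Hypotheses (AP : A \subset P) (PAB : P \subset A :|: B) (BY : B \subset Y).

Lemma setD_sandwich : P :\: Y = A :\: Y.
Proof.
apply/setP => x; rewrite !inE; case: (boolP (x \in Y)) => //= xNY.
apply/idP/idP => [/(subsetP PAB)|/(subsetP AP)//].
by rewrite inE => /orP[// | /(subsetP BY)]; rewrite (negPf xNY).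
Qed.

Lemma setU_sandwich : P :|: Y = A :|: Y.
Proof.
apply/eqP; rewrite eqEsubset !subUset !subsetUr !andbT.
by rewrite (subset_trans PAB (setUS _ BY)) (subset_trans AP (subsetUl _ _)).
Qed.

End SetSandwich.

Section Connectivity.
Variables (V : finType) (f : {set V} -> nat).
Hypothesis fconn : connectivity f.

Lemma conn_set0 : f set0 = 0.
Proof. by case: fconn. Qed.

Lemma conn_setC X : f (~: X) = f X.
Proof. by case: fconn => _ fC _; rewrite -fC. Qed.

Lemma conn_submod X Y : f (X :|: Y) + f (X :&: Y) <= f X + f Y.
Proof. by case: fconn. Qed.

Lemma conn_posimod X Y : f (X :\: Y) + f (Y :\: X) <= f X + f Y.
Proof.
have := conn_submod X (~: Y).
by rewrite -(conn_setC (X :|: _)) setCU setCK !conn_setC setIC -!setDE addnC.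
Qed.

Lemma conn_setD_le X Y : f (X :\: Y) <= f X + f Y.
Proof. exact: leq_trans (leq_addr _ _) (conn_posimod X Y). Qed.

Lemma conn_posimod_lt X P : f P < f (P :\: X) -> f (X :\: P) < f X.
Proof. by have := conn_posimod X P; lia. Qed.

End Connectivity.

Section Tripartition.
Variable V : finType.
Implicit Types (C : 'I_3 -> {set V}) (A P : {set V}).

Lemma tripartitionP C :
  (forall x, exists l, x \in C l) ->
  (forall x l m, x \in C l -> x \in C m -> l = m) ->
  tripartition C.
Proof.
move=> cover uniq; split.
  move=> l m /eqP lm; rewrite disjoints_subset; apply/subsetP => x xl.
  by rewrite inE; apply/negP => /(uniq x l m xl).
apply/setP => x; rewrite inE; apply/bigcupP.
by have [l xl] := cover x; exists l.
Qed.

Lemma tripartition_cover C : tripartition C -> forall x, exists l, x \in C l.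
Proof.
move=> [_ Ccov] x; have : x \in \bigcup_(l < 3) C l by rewrite Ccov inE.
by case/bigcupP=> l _ xl; exists l.
Qed.

Lemma tripartition_uniq C :
  tripartition C -> forall x l m, x \in C l -> x \in C m -> l = m.
Proof.
move=> [Cdisj _] x l m xl xm; apply/eqP; apply: contraT => /Cdisj/disjointFr.
by move/(_ x xl); rewrite xm.
Qed.

Definition absorb C (i : 'I_3) P (l : 'I_3) :=
  if l == i then P else C l :\: P.

Definition bipartition (i j : 'I_3) A (l : 'I_3) :=
  if l == i then A else if l == j then ~: A else set0.

Lemma tripartition_absorb C i P :
  tripartition C -> C i \subset P -> tripartition (absorb C i P).
Proof.
rewrite /absorb => Ctri CiP; apply: tripartitionP => [x | x l m].
  case: (boolP (x \in P)) => xP; first by exists i; rewrite eqxx.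
  have [l xl] := tripartition_cover Ctri x.
  exists l; case: eqP => [li | _]; last by rewrite inE xP.
  by move: xP; rewrite (subsetP CiP) // -li.
case: eqP => [-> | _]; case: eqP => [-> // | _]; rewrite !inE.
- by move=> ->.
- by case/andP=> /negPf->.
- by move=> /andP[_ xl] /andP[_ xm]; apply: tripartition_uniq Ctri x l m xl xm.
Qed.

Lemma tripartition_bipartition i j A : i != j -> tripartition (bipartition i j A).
Proof.
rewrite /bipartition => /negPf ij; apply: tripartitionP => [x | x].
  case: (boolP (x \in A)) => xA; first by exists i; rewrite eqxx.
  by exists j; rewrite eq_sym ij eqxx inE.
have part_of k : x \in bipartition i j A k -> k = if x \in A then i else j.
  rewrite /bipartition; case: eqP => [-> -> // | _].
  by case: eqP => [-> | _]; rewrite inE // => /negPf->.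
by move=> l m /part_of-> /part_of->.
Qed.

Lemma arity_le3 C : arity C <= 3.
Proof. by rewrite /arity (leq_trans (max_card _)) ?card_ord. Qed.

Lemma arity_bipartition i j A : arity (bipartition i j A) <= 2.
Proof.
apply: leq_trans (subset_leq_card (B := [set i; j]) _) _; last first.
  by rewrite cards2 ltnS leq_b1.
apply/subsetP => l; rewrite !inE /bipartition.
by case: (l == i); case: (l == j); rewrite ?eqxx ?orbT.
Qed.

End Tripartition.

Section Minimality.
Variables (V : finType) (f : {set V} -> nat) (W : {set V}).
Variables (C D : 'I_3 -> {set V}).
Hypotheses (Cmin : min_improvement f W C) (Dimp : improvement f W D).
Hypothesis DC : width f D <= width f C.

Lemma min_improvement_arity : arity C <= arity D.
Proof.
case: (Cmin.2 D Dimp) => [|[_ [/ltnW | [-> _]]]] //.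
by rewrite ltnNge DC.
Qed.

Lemma min_improvement_sumwidth :
  arity D <= arity C -> sumwidth f C <= sumwidth f D.
Proof.
move=> DC_arity; case: (Cmin.2 D Dimp) => [|[_ [|[_ ->]]]] //.
  by rewrite ltnNge DC.
by rewrite ltnNge DC_arity.
Qed.

End Minimality.

Section MinimumImprovement.
Variables (V : finType) (f : {set V} -> nat) (W : {set V}).
Variable C : 'I_3 -> {set V}.
Hypotheses (fconn : connectivity f) (Cmin : min_improvement f W C).

Lemma min_improvement_setU_gt i : 2 < arity C -> f (C i) < f (C i :|: W).
Proof.
move=> Car; rewrite ltnNge; apply/negP => CiW_le.
have [[Ctri Cbnd] _] := Cmin; have [Ci_lt _ _] := Cbnd i.
pose j := lift i ord0; pose D := bipartition i j (C i).
have Dimp : improvement f W D.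
  split; first exact/tripartition_bipartition/neq_lift.
  move=> l; rewrite /D /bipartition; case: eqP => _; first exact: Cbnd.
  case: eqP => _; last by rewrite !set0I conn_set0 //; split; lia.
  have WCi_le : f (W :\: C i) <= f (C i :|: W) + f (C i).
    by have := conn_setD_le fconn (C i :|: W) (C i); rewrite setDUl setDv set0U.
  rewrite -setCU !conn_setC // setIC -setDE; split; lia.
have DC : width f D <= width f C.
  apply/bigmax_leqP => l _; apply: leq_trans (leq_bigmax i).
  rewrite /D /bipartition; case: eqP => // _.
  by case: eqP => _; rewrite ?conn_setC ?conn_set0.
have := leq_trans (min_improvement_arity Cmin Dimp DC) (arity_bipartition i j _).
by rewrite leqNgt Car.
Qed.

End MinimumImprovement.

Section Absorb.
Variables (V : finType) (f : {set V} -> nat) (W : {set V}).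
Variables (C : 'I_3 -> {set V}) (i j : 'I_3) (P : {set V}).
Hypotheses (Ctri : tripartition C) (neq_ij : i != j) (CiP : C i \subset P).
Hypothesis PCij : P \subset C i :|: (W :&: C j).

Let Cdisj := Ctri.1.

Lemma absorb_setD_part : P :\: C j = C i.
Proof.
rewrite (setD_sandwich CiP PCij (subsetIr _ _)).
exact/setDidPl/Cdisj.
Qed.

Lemma absorb_setD_partI : P :\: (C j :&: W) = C i.
Proof.
rewrite (setD_sandwich CiP PCij); last by rewrite setIC.
exact/setDidPl/(disjointWr (subsetIl _ _))/Cdisj.
Qed.

Lemma absorb_setIC l : l != i -> (C l :\: P) :&: ~: W = C l :&: ~: W.
Proof.
move=> neq_li; rewrite -!setDE setDDl.
by rewrite (setU_sandwich CiP PCij (subsetIl _ _)) -setDDl (setDidPl (Cdisj neq_li)).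
Qed.

Lemma absorb_setD_other l : l != i -> l != j -> C l :\: P = C l.
Proof.
move=> neq_li neq_lj; apply/setDidPl.
rewrite disjoint_sym (disjointWl PCij) // disjoints_subset subUset.
rewrite -!disjoints_subset disjoint_sym Cdisj //=.
by rewrite (disjointWl (subsetIr _ _)) // disjoint_sym Cdisj.
Qed.

Lemma min_improvement_absorb :
  connectivity f -> min_improvement f W C -> arity C = 3 ->
  f P < f (C i) -> f W <= f (P :&: W).
Proof.
move=> fconn Cmin Car P_lt; rewrite leqNgt; apply/negP => PW_lt.
have [[_ Cbnd] _] := Cmin.
have Cj_lt : f (C j :\: P) < f (C j).
  by apply: conn_posimod_lt; rewrite ?absorb_setD_part.
have CjW_lt : f ((C j :&: W) :\: P) < f (C j :&: W).
  by apply: conn_posimod_lt; rewrite ?absorb_setD_partI.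
have part_le l : l != i ->
    f (C l :\: P) <= f (C l) /\ f ((C l :\: P) :&: W) <= f (C l :&: W).
  move=> neq_li; have [-> | neq_lj] := eqVneq l j; last by rewrite absorb_setD_other.
  by rewrite setIDAC; split; apply: ltnW.
have Dimp : improvement f W (absorb C i P).
  split; first exact: tripartition_absorb.
  move=> l; rewrite /absorb; case: eqP => [_ | /eqP neq_li].
    have [Ci_lt _ CiW_lt] := Cbnd i.
    rewrite -setDE (setD_sandwich CiP PCij (subsetIl _ _)) setDE; split; lia.
  have [Cl_lt ClW_lt ClnW_lt] := Cbnd l; have [Cl_le ClW_le] := part_le l neq_li.
  rewrite absorb_setIC //; split; lia.
have DC : width f (absorb C i P) <= width f C.
  apply/bigmax_leqP => l _; apply: leq_trans (leq_bigmax l).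
  rewrite /absorb; case: eqP => [-> | /eqP/part_le[] //]; exact: ltnW.
have := min_improvement_sumwidth Cmin Dimp DC; rewrite Car arity_le3 => /(_ isT).
apply/negP; rewrite -ltnNge /sumwidth (bigD1 i) //= [X in _ < X](bigD1 i) //=.
rewrite {1}/absorb eqxx -addSn leq_add // leq_sum // => l neq_li.
by rewrite /absorb (negPf neq_li); case: (part_le l neq_li).
Qed.

End Absorb.

Theorem lemma9 (V : finType) (f : {set V} -> nat) (W : {set V})
    (C : 'I_3 -> {set V}) :
  connectivity f ->
  min_improvement f W C ->
  arity C = 3 ->
  forall (i j : 'I_3) (P : {set V}),
    C i \subset P -> P \subset C i :|: (W :&: C j) ->
    f (C i) <= f P.
Proof.
move=> fconn Cmin Car i j P CiP PCij.
have [eq_ij | neq_ij] := eqVneq i j.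
  rewrite (_ : P = C i) //; apply/eqP; rewrite eqEsubset CiP andbT.
  by rewrite (subset_trans PCij) // subUset subxx -eq_ij subsetIr.
rewrite leqNgt; apply/negP => P_lt.
have PW_ge := min_improvement_absorb Cmin.1.1 neq_ij CiP PCij fconn Cmin Car P_lt.
have CiW_gt : f (C i) < f (C i :|: W).
  by apply: (min_improvement_setU_gt fconn Cmin); rewrite Car.
have := conn_submod fconn P W.
rewrite (setU_sandwich CiP PCij (subsetIl _ _)); lia.
Qed.
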